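(* Let $n\ge 1$ and $k\ge 1$ be integers, let $A=(a_{pq})$ be a real $n\times n$ matrix, and let $j\in\{1,\dots,n\}$ be such that $a_{1j}<0$. Suppose $\lambda>0$ is a simple eigenvalue of $A$ and $A\mathbf u=\lambda\mathbf u$, $\mathbf v^TA=\lambda\mathbf v^T$ for some entrywise positive vectors $\mathbf u,\mathbf v\in\mathbb R^n$. Define the real $(k+n)\times(k+n)$ matrix $B=(b_{pq})$ by $$b_{pq}=\begin{cases} \lambda-a_{1j},&\text{if }p=q\in\{1,\dots,k\};\\ a_{1j},&\text{if }(p,q)\in\{(k,k+j),(k+1,1)\}\cup\{(1,2),(2,3),\dots,(k-1,k)\};\\ a_{p-k,q-k},&\text{if }p,q\in\{k+1,\dots,k+n\}\text{ and }(p,q)\neq(k+1,k+j);\\ 0,&\text{otherwise}. \end{cases}$$ Then $\lambda$ is a simple eigenvalue of $B$, and $B\mathbf w=\lambda\mathbf w$, $\mathbf z^TB=\lambda\mathbf z^T$, where $w_i=u_j$ and $z_i=v_1$ for $1\le i\le k$, and $w_i=u_{i-k}$, $z_i=v_{i-k}$ for $k+1\le i\le k+n$. Consequently, $B$ is algebraically positive.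
   Context: A real square matrix $M$ is algebraically positive if there is a real polynomial $f$ such that every entry of $f(M)$ is positive. A simple eigenvalue is one of algebraic multiplicity one. *)

From HB Require Import structures.
From mathcomp Require Import all_boot all_order all_algebra.
From mathcomp Require Import reals.
Set Implicit Arguments. Unset Strict Implicit. Unset Printing Implicit Defensive.
Import Order.TTheory GRing.Theory Num.Theory.
Local Open Scope ring_scope.

Definition simple_eigenvalue (R : fieldType) (m : nat) (M : 'M[R]_m) (lam : R) : Prop :=
  mup lam (char_poly M) = 1%N.

Definition alg_positive (R : realType) (m : nat) (M : 'M[R]_m.+1) : Prop :=
  exists f : {poly R}, forall i j, 0 < (horner_mx M f) i j.

(* The matrix B of the theorem, with 0-based indices:
   1-based row/col p corresponds to 0-based p-1; a_{1j} = A ord0 j. *)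
Definition Bmat (R : realType) (k n : nat) (A : 'M[R]_n.+1) (j : 'I_n.+1) (lam : R)
  : 'M[R]_(k + n.+1) :=
  \matrix_(p, q)
    let a := A ord0 j in
    if ((p : nat) == q) && (p < k)%N then lam - a
    else if [|| ((p : nat) == k.-1) && ((q : nat) == k + j)%N,
                ((p : nat) == k) && ((q : nat) == 0%N)
              | (p.+1 < k)%N && ((q : nat) == p.+1)] then a
    else if [&& (k <= p)%N, (k <= q)%N & ~~ (((p : nat) == k) && ((q : nat) == k + j)%N)]
    then A (inord (p - k)) (inord (q - k))
    else 0.

Definition ext_vec (R : realType) (k n : nat) (u : 'cV[R]_n.+1) (c : R)
  : 'cV[R]_(k + n.+1) :=
  \col_i (if (i < k)%N then c else u (inord (i - k)) 0).

From HB Require Import structures.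
From mathcomp Require Import all_boot all_order all_algebra.
From mathcomp Require Import zify ring.
From mathcomp Require Import reals.
Set Implicit Arguments. Unset Strict Implicit. Unset Printing Implicit Defensive.
Import Order.TTheory GRing.Theory Num.Theory.
Local Open Scope ring_scope.

(** Let [w], [z] be right and left [lam]-eigenvectors of [M] and [q := char_poly M %/ ('X - lam)].
    Writing [adj ('X - M) = adj (lam - M) + ('X - lam) Q] and cancelling ['X - lam] in
    [('X - M) adj ('X - M) = char_poly M] gives [(lam - M) Y + adj (lam - M) = q(lam)],
    while [adj (lam - M)] is nonzero exactly when [rank (lam - M) >= N - 1]. Hence [lam] is
    simple iff [rank (lam - M) = N - 1] and [z^T w <> 0]. If moreover [w] and [z] are positive,
    Cayley-Hamilton makes every column of [q(M)] a right and every row a left eigenvector, so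
    [q(M) = kappa w z^T] with [kappa <> 0], and [kappa^-1 q] is the required polynomial.
    In block form [B] is [diag(lam, A)] perturbed by [a_1j] times a path from the first
    [k + 1] coordinates to coordinate [k + 1 + j] and back, so [B x = lam x] forces [x] to be
    constant along that path, and then its lower part is a [lam]-eigenvector of [A]. *)

Section Adjugate.
Variable F : fieldType.

Lemma row'_sub m p (i : 'I_m) (A : 'M[F]_(m, p)) : (row' i A <= A)%MS.
Proof. exact: rowsub_sub. Qed.

Lemma exists_row'_rank m p (A : 'M[F]_(m.+1, p)) :
  (\rank A <= m)%N -> exists i, \rank (row' i A) = \rank A.
Proof.
move=> rkA; set y := nz_row (kermx A).
have yA : y *m A = 0 by apply/sub_kermxP; exact: nz_row_sub.
have /existsP[i yi] : [exists i, y 0 i != 0].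
  apply: contraLR rkA; rewrite negb_exists -ltnNge => /forallP y0.
  have /eqP : y = 0 by apply/rowP => i; rewrite mxE; apply/eqP/negPn/y0.
  by rewrite nz_row_eq0 kermx_eq0 /row_free => /eqP ->.
exists i; apply/eqP; rewrite eqn_leq mxrankS ?row'_sub //=; apply: mxrankS.
apply/row_subP => l; have [l' ->|->] := unliftP i l.
  by apply/(eq_row_sub l')/rowP => c; rewrite !mxE.
have : row i A = - (y 0 i)^-1 *: \sum_(l' < m) y 0 (lift i l') *: row l' (row' i A).
  move: yA; rewrite mulmx_sum_row (bigD1_ord i) //= => /eqP; rewrite addr_eq0 => /eqP.
  move=> /(congr1 ( *:%R (y 0 i)^-1)); rewrite scalerA mulVf // scale1r => ->.
  rewrite scalerN scaleNr; congr (- (_ *: _)); apply: eq_bigr => l' _.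
  by congr (_ *: _); apply/rowP => c; rewrite !mxE.
move=> ->; rewrite scalemx_sub // summx_sub // => l' _.
by rewrite scalemx_sub ?row_sub.
Qed.

Lemma adj_eq0 m (A : 'M[F]_m.+1) : (\adj A == 0) = (\rank A < m)%N.
Proof.
apply/idP/idP => [|rkA]; last first.
  apply/eqP/matrixP => i j; rewrite !mxE /cofactor.
  suff /eqP -> : \det (row' j (col' i A)) == 0 by rewrite mulr0.
  rewrite -[_ == 0]negbK -unitfE -unitmxE -row_free_unit; apply: contraL rkA => /eqP rk.
  rewrite -leqNgt -[X in (X <= _)%N]rk (leq_trans (mxrankS (row'_sub _ _))) //.
  by rewrite -mxrank_tr tr_col' (leq_trans (mxrankS (row'_sub _ _))) ?mxrank_tr.
apply: contraLR; rewrite -leqNgt leq_eqVlt => /orP[/eqP rkA | ].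
  (* Dropping a dependent row, then a dependent column, leaves an invertible minor. *)
  have [i rki] := exists_row'_rank (eq_leq (esym rkA)).
  have [j rkj] := exists_row'_rank (rank_leq_col (row' i A)^T).
  apply/eqP => /matrixP /(_ j i) /eqP; rewrite !mxE /cofactor mulf_eq0 signr_eq0 /=.
  apply/negP; rewrite -det_tr -unitfE -unitmxE -row_free_unit /row_free.
  have -> : (row' i (col' j A))^T = row' j (row' i A)^T by apply/matrixP => ? ?; rewrite !mxE.
  by rewrite rkj mxrank_tr rki -rkA.
move=> rkA; apply/eqP => adj0.
have : A \in unitmx by rewrite -row_free_unit /row_free eqn_leq rank_leq_row.
rewrite unitmxE unitfE; apply/negP; rewrite negbK.
by have := mul_mx_adj A; rewrite adj0 mulmx0 => /matrixP /(_ 0 0); rewrite !mxE eqxx mulr1n => <-.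
Qed.
End Adjugate.

Section Eigenvectors.
Variables (F : fieldType) (N : nat) (M : 'M[F]_N) (lam : F).

Lemma eigenvector_mulE (x : 'cV_N) : ((lam%:M - M) *m x == 0) = (M *m x == lam *: x).
Proof. by rewrite mulmxBl mul_scalar_mx subr_eq0 eq_sym. Qed.

Lemma eigenvector_kerE (x : 'cV_N) : (x^T <= kermx (lam%:M - M)^T)%MS = (M *m x == lam *: x).
Proof. by rewrite sub_kermx -trmx_mul trmx_eq0 eigenvector_mulE. Qed.

Lemma eigenvector_uniqP (w : 'cV_N) : w != 0 -> M *m w = lam *: w ->
  reflect (forall x, M *m x = lam *: x -> exists c, x = c *: w)
          (N.-1 <= \rank (lam%:M - M)%R)%N.
Proof.
move=> nzw Mw; set K := kermx (lam%:M - M)^T.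
have rkK : \rank K = (N - \rank (lam%:M - M)%R)%N by rewrite mxrank_ker mxrank_tr.
have wK : (w^T <= K)%MS by rewrite eigenvector_kerE Mw.
have rkw : \rank w^T = 1%N by rewrite rank_rV trmx_eq0 nzw.
apply: (iffP idP) => [rkD x Mx | uniq].
  have /eqmxP Kw : (w^T == K)%MS.
    by have := mxrank_leqif_eq wK; rewrite rkw rkK => -[le <-]; move: le rkD; lia.
  have /sub_rVP[c xc] : (x^T <= w^T)%MS by rewrite Kw eigenvector_kerE Mx.
  by exists c; apply: trmx_inj; rewrite xc linearZ.
have /mxrankS : (K <= w^T)%MS.
  apply/row_subP => i; have [|c /(congr1 trmx)] := uniq (row i K)^T.
    by apply/eqP; rewrite -eigenvector_kerE trmxK row_sub.
  by rewrite trmxK linearZ => -> /=; rewrite scalemx_sub.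
rewrite rkK rkw; lia.
Qed.
End Eigenvectors.

Lemma left_eigenvector_uniq (F : fieldType) N (M : 'M[F]_N) lam (z : 'cV_N) :
  (N.-1 <= \rank (lam%:M - M)%R)%N -> z != 0 -> z^T *m M = lam *: z^T ->
  forall x, x^T *m M = lam *: x^T -> exists c, x = c *: z.
Proof.
have leftE (x : 'cV_N) : (x^T *m M = lam *: x^T) <-> (M^T *m x = lam *: x).
  by split => /(congr1 trmx); rewrite trmx_mul trmxK linearZ /= ?trmxK.
move=> rkD nzz /leftE Mz.
have /(eigenvector_uniqP nzz Mz) uniqT : (N.-1 <= \rank (lam%:M - M^T)%R)%N.
  by rewrite -mxrank_tr linearB /= tr_scalar_mx trmxK.
by move=> x /leftE /uniqT.
Qed.

Lemma mup_eq1 (F : fieldType) (x : F) q : q != 0 -> root q x ->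
  (mup x q == 1%N) = ~~ root (q %/ ('X - x%:P)) x.
Proof.
move=> nzq qx; have dvd : 'X - x%:P %| q by rewrite dvdp_XsubCl.
have nzh : q %/ ('X - x%:P) != 0.
  by apply: contraNneq nzq => h0; rewrite -(divpK dvd) h0 mul0r.
rewrite -{1}(divpK dvd) mupM ?polyXsubC_eq0 // -[_ - _]expr1 mup_XsubCX eqxx.
by rewrite addn1 eqSS -dvdp_XsubCl XsubC_dvd // lt0n negbK.
Qed.

Lemma simple_eigenvalueP (F : fieldType) N (M : 'M[F]_N) lam :
  simple_eigenvalue M lam <->
  root (char_poly M) lam /\ ~~ root (char_poly M %/ ('X - lam%:P)) lam.
Proof.
have nzp : char_poly M != 0 by rewrite monic_neq0 ?char_poly_monic.
rewrite /simple_eigenvalue; split => [mup1 | [root_lam qlam]].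
  have root_lam : root (char_poly M) lam by rewrite -dvdp_XsubCl XsubC_dvd // mup1.
  by move/eqP: mup1; rewrite mup_eq1.
by apply/eqP; rewrite mup_eq1.
Qed.

Section CharPolyQuotient.
Variables (F : fieldType) (N : nat) (M : 'M[F]_N) (lam : F).
Local Notation t := ('X - lam%:P).

Lemma eval_char_poly_mx : map_mx (horner_eval lam) (char_poly_mx M) = lam%:M - M.
Proof.
apply/matrixP => i j; rewrite !mxE /horner_eval hornerD hornerN hornerMn hornerX hornerC.
by case: (i == j); rewrite ?mulr1n ?mulr0n.
Qed.

Lemma horner_char_poly : (char_poly M).[lam] = \det (lam%:M - M).
Proof. by rewrite -eval_char_poly_mx det_map_mx. Qed.

Lemma adj_char_poly_quotient : root (char_poly M) lam ->
  exists Y, (lam%:M - M) *m Y + \adj (lam%:M - M) = (char_poly M %/ t).[lam]%:M.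
Proof.
move=> root_lam; set D := lam%:M - M.
have detD : \det D = 0 by rewrite -horner_char_poly; apply/eqP.
have split_at (P : 'M[{poly F}]_N) :
    P = map_mx polyC (map_mx (horner_eval lam) P) + t *: map_mx (fun q => (q - q.[lam]%:P) %/ t) P.
  apply/matrixP => i j; rewrite !mxE /horner_eval mulrC divpK; first by rewrite addrC subrK.
  by rewrite dvdp_XsubCl /root hornerD hornerN hornerC subrr.
pose Q := \adj (char_poly_mx M).
pose Q1 := map_mx (fun q => (q - q.[lam]%:P) %/ t) Q.
have QE : Q = map_mx polyC (\adj D) + t *: Q1.
  by rewrite {1}[Q]split_at map_mx_adj eval_char_poly_mx.
have PE : char_poly_mx M = t%:M + map_mx polyC D.
  apply/matrixP => i j; rewrite !mxE polyCB polyCMn.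
  by case: (i == j); rewrite ?mulr1n ?mulr0n; ring.
have cancel_t (X Y : 'M[{poly F}]_N) : t *: X = t *: Y -> X = Y.
  move=> /matrixP tXY; apply/matrixP => i j; have := tXY i j; rewrite !mxE.
  by apply: mulfI; rewrite polyXsubC_eq0.
have PadjD : char_poly_mx M *m map_mx polyC (\adj D) = t *: map_mx polyC (\adj D).
  by rewrite PE mulmxDl mul_scalar_mx -map_mxM mul_mx_adj detD raddf0 map_mx0 addr0.
have /cancel_t key :
    t *: (map_mx polyC (\adj D) + char_poly_mx M *m Q1) = t *: (char_poly M %/ t)%:M.
  rewrite scalerDr scalemxAr -PadjD -mulmxDr -QE mul_mx_adj scale_scalar_mx mulrC.
  by rewrite divpK // dvdp_XsubCl.
have evC (X : 'M[F]_N) : map_mx (horner_eval lam) (map_mx polyC X) = X.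
  by apply/matrixP => i j; rewrite !mxE /horner_eval hornerC.
exists (map_mx (horner_eval lam) Q1).
move/(congr1 (map_mx (horner_eval lam))): key.
by rewrite map_mxD map_mxM evC eval_char_poly_mx map_scalar_mx addrC.
Qed.
End CharPolyQuotient.

Lemma simple_eigenvalue_rank (F : fieldType) N (M : 'M[F]_N) lam :
  simple_eigenvalue M lam -> (N.-1 <= \rank (lam%:M - M)%R)%N.
Proof.
case: N M => [//|m] M /simple_eigenvalueP[root_lam qlam].
rewrite leqNgt -adj_eq0; apply/negP => /eqP adj0.
have [Y] := adj_char_poly_quotient root_lam; rewrite adj0 addr0 => DY.
set c := (char_poly M %/ _).[lam] in DY qlam.
have /mulmx1_unit[+ _] : (lam%:M - M) *m (c^-1 *: Y) = 1%:M.
  by rewrite -scalemxAr DY scale_scalar_mx mulVf.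
by rewrite unitmxE unitfE -horner_char_poly (rootP root_lam) eqxx.
Qed.

Lemma simple_eigenvalue_of_rank (F : fieldType) N (M : 'M[F]_N) lam (w z : 'cV_N) :
  (N.-1 <= \rank (lam%:M - M)%R)%N -> M *m w = lam *: w -> z^T *m M = lam *: z^T ->
  z^T *m w != 0 -> simple_eigenvalue M lam.
Proof.
case: N M w z => [|m] M w z rkD Mw zM zw; first by rewrite [w]flatmx0 mulmx0 eqxx in zw.
have nzw : w != 0 by apply: contraNneq zw => ->; rewrite mulmx0.
have zD : z^T *m (lam%:M - M) = 0 by rewrite mulmxBr mul_mx_scalar zM subrr.
have root_lam : root (char_poly M) lam.
  rewrite /root horner_char_poly; apply/det0P; exists z^T => //.
  by apply: contraNneq zw => ->; rewrite mul0mx.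
apply/simple_eigenvalueP; split => //; apply/negP => /rootP qlam.
have [Y] := adj_char_poly_quotient root_lam; rewrite qlam => adjE.
have zadj : z^T *m \adj (lam%:M - M) = 0.
  have -> : \adj (lam%:M - M) = - ((lam%:M - M) *m Y).
    by rewrite -[\adj _](addKr ((lam%:M - M) *m Y)) adjE raddf0 addr0.
  by rewrite mulmxN mulmxA zD mul0mx oppr0.
have Dadj : (lam%:M - M) *m \adj (lam%:M - M) = 0.
  by rewrite mul_mx_adj -horner_char_poly (rootP root_lam) raddf0.
have /(eigenvector_uniqP nzw Mw) uniq := rkD.
move: rkD; rewrite leqNgt -adj_eq0 => /negP; apply; apply/eqP/matrixP => i j.
have [|c adjj] := uniq (col j (\adj (lam%:M - M))).
  by apply/eqP; rewrite -eigenvector_mulE colE mulmxA Dadj mul0mx.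
have /eqP : c *: (z^T *m w) = 0 by rewrite scalemxAr -adjj colE mulmxA zadj mul0mx.
rewrite scaler_eq0 (negbTE zw) orbF => /eqP c0.
by move/matrixP: adjj => /(_ i 0); rewrite !mxE c0 mul0r => ->.
Qed.

Lemma pos_cV_neq0 (R : numDomainType) m (x : 'cV[R]_m.+1) : (forall i, 0 < x i 0) -> x != 0.
Proof. by move=> xpos; apply: contraTneq (xpos 0) => ->; rewrite mxE ltxx. Qed.

Lemma pos_cV_dot_neq0 (R : numDomainType) m (z w : 'cV[R]_m.+1) :
  (forall i, 0 < z i 0) -> (forall i, 0 < w i 0) -> z^T *m w != 0.
Proof.
move=> zpos wpos; have zw_pos i : 0 < z^T 0 i * w i 0 by rewrite mxE mulr_gt0.
apply/eqP => /matrixP/(_ 0 0); rewrite !mxE.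
move=> /(psumr_eq0P (fun i _ => ltW (zw_pos i)))/(_ 0 isT)/eqP.
by rewrite gt_eqF ?zw_pos.
Qed.

Lemma horner_mx_eigenvector (R : comNzRingType) m (M : 'M[R]_m.+1) lam (w : 'cV_m.+1) p :
  M *m w = lam *: w -> horner_mx M p *m w = p.[lam] *: w.
Proof.
move=> Mw; elim/poly_ind: p => [|p c IH]; first by rewrite rmorph0 mul0mx horner0 scale0r.
rewrite rmorphD rmorphM /= horner_mx_X horner_mx_C mulmxDl -mulmxE -mulmxA Mw.
by rewrite -scalemxAr IH scalerA mul_scalar_mx -scalerDl hornerMXaddC mulrC.
Qed.

Lemma eq_outer_of_cols_rows (F : fieldType) p q (G : 'M[F]_(p, q)) (w : 'cV_p) (z : 'cV_q) i :
  w i 0 != 0 -> (forall b, exists c, col b G = c *: w) -> (exists d, (row i G)^T = d *: z) ->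
  exists kappa, G = kappa *: (w *m z^T).
Proof.
move=> wi cols [d rowi]; exists (d / w i 0); apply/matrixP => a b.
have [c colb] := cols b.
have -> : G a b = c * w a 0 by move/matrixP: colb => /(_ a 0); rewrite !mxE.
have Gib : G i b = d * z b 0 by move/matrixP: rowi => /(_ b 0); rewrite !mxE.
have -> : c = d * z b 0 / w i 0.
  by apply: (mulIf wi); rewrite mulfVK // -Gib; move/matrixP: colb => /(_ i 0); rewrite !mxE.
by rewrite !mxE big_ord1 !mxE; field.
Qed.

Lemma simple_eigenvalue_alg_positive (R : realType) m (M : 'M[R]_m.+1) lam (w z : 'cV_m.+1) :
  simple_eigenvalue M lam -> M *m w = lam *: w -> z^T *m M = lam *: z^T ->
  (forall i, 0 < w i 0) -> (forall i, 0 < z i 0) -> alg_positive M.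
Proof.
move=> simple Mw zM wpos zpos; have rkD := simple_eigenvalue_rank simple.
have [root_lam qlam] := (simple_eigenvalueP M lam).1 simple.
set q := char_poly M %/ ('X - lam%:P); set G := horner_mx M q.
have charE : char_poly M = q * ('X - lam%:P) by rewrite divpK // dvdp_XsubCl.
have horner_t : horner_mx M ('X - lam%:P) = M - lam%:M.
  by rewrite rmorphB /= horner_mx_X horner_mx_C.
have GM : G *m M = lam *: G.
  apply/eqP; rewrite -subr_eq0 -mul_mx_scalar -mulmxBr mulmxE -horner_t -rmorphM.
  by rewrite -charE; apply/eqP; exact: Cayley_Hamilton.
have MG : M *m G = lam *: G.
  apply/eqP; rewrite -subr_eq0 -mul_scalar_mx -mulmxBl mulmxE -horner_t -rmorphM.
  by rewrite mulrC -charE; apply/eqP; exact: Cayley_Hamilton.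
have cols b : exists c, col b G = c *: w.
  by apply: (elimT (eigenvector_uniqP (pos_cV_neq0 wpos) Mw) rkD); rewrite colE mulmxA MG scalemxAl.
have row0 : exists d, (row 0 G)^T = d *: z.
  apply: (left_eigenvector_uniq rkD (pos_cV_neq0 zpos) zM).
  by rewrite trmxK -row_mul GM linearZ.
have [kappa Gk] := eq_outer_of_cols_rows (lt0r_neq0 (wpos 0)) cols row0.
have nzk : kappa != 0.
  apply: contraNneq qlam => k0; have := horner_mx_eigenvector q Mw.
  rewrite -/G Gk k0 scale0r mul0mx => /esym/eqP.
  by rewrite scaler_eq0 (negbTE (pos_cV_neq0 wpos)) orbF.
exists (kappa^-1 *: q) => a b.
rewrite linearZ /= -/G Gk scalerA mulVf // scale1r mxE big_ord1 mxE.
exact: mulr_gt0.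
Qed.

Section ShiftMatrix.
Variable R : comNzRingType.

Lemma delta_mx_mulmx m p (i : 'I_m) (l : 'I_p) (y : 'cV[R]_p) :
  delta_mx i l *m y = y l 0 *: delta_mx i 0.
Proof.
apply/matrixP => r s; rewrite (ord1 s) !mxE (bigD1 l) //= big1 => [|t tl].
  by rewrite !mxE eqxx !andbT addr0 mulrC.
by rewrite !mxE (negbTE tl) andbF mul0r.
Qed.

Lemma mulmx_delta_mx p m (i : 'I_p) (l : 'I_m) (x : 'rV[R]_p) :
  x *m delta_mx i l = x 0 i *: delta_mx 0 l.
Proof.
by apply: trmx_inj; rewrite trmx_mul !trmx_delta delta_mx_mulmx linearZ /= trmx_delta mxE.
Qed.

Definition shift_mx m : 'M[R]_m.+1 := \matrix_(p, q) (p.+1 == q :> nat)%:R.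

Lemma shift_mx_mulmx m (x : 'cV[R]_m.+1) (p : 'I_m.+1) :
  (shift_mx m *m x) p 0 = if (p < m)%N then x (inord p.+1) 0 else 0.
Proof.
rewrite mxE; case: ltnP => pm.
  rewrite (bigD1 (inord p.+1)) //= big1 => [|q qp]; rewrite !mxE.
    by rewrite inordK // eqxx mul1r addr0.
  suff /negbTE -> : p.+1 != q :> nat by rewrite mul0r.
  by apply: contra qp => /eqP pq; apply/eqP/val_inj; rewrite /= inordK pq.
rewrite big1 // => q _; rewrite mxE; case: eqP => [pq|]; last by rewrite mul0r.
by have := ltn_ord q; rewrite -pq; lia.
Qed.

Lemma shift_mx_const m (c : R) :
  shift_mx m *m const_mx c = const_mx c - c *: delta_mx ord_max 0 :> 'cV_m.+1.
Proof.
apply/matrixP => p s; rewrite (ord1 s) shift_mx_mulmx !mxE eqxx andbT.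
case: ltnP => pm; first by rewrite -(inj_eq val_inj) /= ltn_eqF // mulr0 subr0.
suff /eqP -> : p == ord_max by rewrite eqxx mulr1 subrr.
by rewrite -(inj_eq val_inj) /= eqn_leq pm -ltnS ltn_ord.
Qed.

Lemma const_mulmx_shift m (c : R) :
  const_mx c *m shift_mx m = const_mx c - c *: delta_mx 0 0 :> 'rV_m.+1.
Proof.
apply/matrixP => s q; rewrite (ord1 s) !mxE eqxx /=.
rewrite -(inj_eq val_inj) /= mulr_natr; case: q => [[|q] qm] /=.
  by rewrite mulr1n subrr big1 // => p _; rewrite !mxE mulr_natr.
rewrite mulr0n subr0 (bigD1 (Ordinal (ltnW qm))) //= big1 => [|p pq]; rewrite !mxE.
  by rewrite eqxx mulr1 addr0.
suff /negbTE -> : p.+1 != q.+1 by rewrite mulr0.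
by apply: contra pq => /eqP [pq]; apply/eqP/val_inj.
Qed.

Lemma shift_mx_fixed m (x : 'cV[R]_m.+1) c :
  shift_mx m *m x + c *: delta_mx ord_max 0 = x -> x = const_mx c.
Proof.
move=> /matrixP fx.
have step p : (p < m)%N -> x (inord p) 0 = x (inord p.+1) 0.
  move=> pm; rewrite -fx mxE shift_mx_mulmx !mxE -(inj_eq val_inj) /= !(inordK (ltnW pm)) pm.
  by rewrite ltn_eqF // mulr_natr mulr0n addr0.
have x_last : x ord_max 0 = c by rewrite -fx mxE shift_mx_mulmx ltnn !mxE !eqxx mulr1 add0r.
have down i : (i <= m)%N -> x (inord (m - i)) 0 = c.
  elim: i => [_|i IH im].
    by rewrite subn0 -x_last; congr (x _ 0); apply/val_inj; rewrite /= inordK.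
  rewrite step; last by lia.
  have -> : (m - i.+1).+1 = (m - i)%N by lia.
  exact: IH (ltnW im).
apply/matrixP => p s; rewrite (ord1 s) mxE -(down (m - p)%N) ?leq_subr //.
by congr (x _ 0); apply/val_inj; rewrite /= inordK subKn // -ltnS ?leq_subr.
Qed.
End ShiftMatrix.

Section ExtendedMatrix.
Variables (R : realType) (n k : nat) (A : 'M[R]_n.+1) (j : 'I_n.+1) (lam : R).
Local Notation a := (A ord0 j).

Lemma Bmat_block : Bmat k.+1 A j lam =
  block_mx ((lam - a)%:M + a *: shift_mx R k) (a *: delta_mx ord_max j)
           (a *: delta_mx 0 0) (A - a *: delta_mx 0 j).
Proof.
apply/matrixP => p q; rewrite -[p]splitK -[q]splitK.
case: (split p) => p'; case: (split q) => q';
  rewrite ?block_mxEul ?block_mxEur ?block_mxEdl ?block_mxEdr;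
  have := ltn_ord p'; have := ltn_ord q'.
- transitivity (if (p' : nat) == q' then lam - a else if (p'.+1 == q')%N then a else 0).
    by rewrite mxE /=; do ! case: ifP => //; move=> *; exfalso; lia.
  rewrite !mxE -val_eqE /= mulr_natr !mulrb.
  by case: eqP => [<-|_]; rewrite ?(gtn_eqF (ltnSn _)) ?addr0 ?add0r.
- transitivity (if ((p' : nat) == k) && ((q' : nat) == j) then a else 0).
    by rewrite mxE /=; do ! case: ifP => //; move=> *; exfalso; lia.
  by rewrite !mxE -[p' == _]val_eqE -[q' == _]val_eqE /= mulr_natr mulrb.
- transitivity (if ((p' : nat) == 0%N) && ((q' : nat) == 0%N) then a else 0).
    by rewrite mxE /=; do ! case: ifP => //; move=> *; exfalso; lia.
  by rewrite !mxE -[p' == _]val_eqE -[q' == _]val_eqE /= mulr_natr mulrb.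
- transitivity (if ((p' : nat) == 0%N) && ((q' : nat) == j) then 0 else A p' q').
    by rewrite mxE /= !addKn !inord_val; do ! case: ifP => //; move=> *; exfalso; lia.
  rewrite !mxE -[p' == _]val_eqE -[q' == _]val_eqE /= mulr_natr mulrb.
  case: ifP => [/andP[/eqP p0 /eqP qj]|_]; last by rewrite subr0.
  have -> : p' = 0 by apply: val_inj.
  have -> : q' = j by apply: val_inj.
  by rewrite subrr.
Qed.

Lemma ext_vec_pos (u : 'cV[R]_n.+1) c :
  (forall i, 0 < u i 0) -> 0 < c -> forall i, 0 < ext_vec k.+1 u c i 0.
Proof. by move=> upos cpos i; rewrite mxE; case: ifP. Qed.

Lemma ext_vec_col_mx (u : 'cV[R]_n.+1) c : ext_vec k.+1 u c = col_mx (const_mx c) u.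
Proof.
apply/matrixP => p s; rewrite -[p]splitK (ord1 s).
case: (split p) => p'; rewrite ?col_mxEu ?col_mxEd !mxE /= ?ltn_ord //.
by rewrite ltnNge leq_addr /= addKn inord_val.
Qed.

Lemma Bmat_eigenvector (u : 'cV[R]_n.+1) : A *m u = lam *: u ->
  Bmat k.+1 A j lam *m ext_vec k.+1 u (u j 0) = lam *: ext_vec k.+1 u (u j 0).
Proof.
move=> Au; rewrite Bmat_block ext_vec_col_mx mul_block_col scale_col_mx; congr col_mx.
  rewrite mulmxDl mul_scalar_mx -!scalemxAl shift_mx_const delta_mx_mulmx.
  by apply/matrixP => p s; rewrite !mxE; ring.
rewrite mulmxBl -!scalemxAl !delta_mx_mulmx Au.
by apply/matrixP => p s; rewrite !mxE; ring.
Qed.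

Lemma Bmat_left_eigenvector (v : 'cV[R]_n.+1) : v^T *m A = lam *: v^T ->
  (ext_vec k.+1 v (v ord0 0))^T *m Bmat k.+1 A j lam = lam *: (ext_vec k.+1 v (v ord0 0))^T.
Proof.
move=> vA; rewrite Bmat_block ext_vec_col_mx tr_col_mx mul_row_block scale_row_mx.
rewrite trmx_const; congr row_mx.
  rewrite mulmxDr mul_mx_scalar -!scalemxAr const_mulmx_shift mulmx_delta_mx.
  by apply/matrixP => s q; rewrite !mxE; ring.
rewrite mulmxBr -!scalemxAr !mulmx_delta_mx vA.
by apply/matrixP => s q; rewrite !mxE; ring.
Qed.

Lemma Bmat_eigenvector_uniq (u : 'cV[R]_n.+1) : a != 0 ->
  (forall y, A *m y = lam *: y -> exists c, y = c *: u) ->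
  forall x, Bmat k.+1 A j lam *m x = lam *: x -> exists c, x = c *: ext_vec k.+1 u (u j 0).
Proof.
move=> nza uniqA x; rewrite -[x]vsubmxK; set x1 := usubmx x; set y := dsubmx x.
rewrite Bmat_block mul_block_col scale_col_mx => /eq_col_mx[top bot].
have x1E : x1 = const_mx (y j 0).
  apply: shift_mx_fixed; apply/matrixP => p s; move/matrixP: top => /(_ p s).
  rewrite mulmxDl mul_scalar_mx -!scalemxAl delta_mx_mulmx.
  move: (shift_mx R k *m x1) => Sx.
  rewrite !mxE => e; apply: (mulfI nza); rewrite mulrDr.
  by apply: (addrI ((lam - a) * x (lshift n.+1 p) s)); rewrite addrA e; ring.
rewrite mulmxBl -!scalemxAl !delta_mx_mulmx x1E mxE addrC subrK in bot.
have [c yc] := uniqA y bot.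
exists c; rewrite ext_vec_col_mx x1E yc scale_col_mx; congr col_mx.
by apply/matrixP => p s; rewrite !mxE.
Qed.
End ExtendedMatrix.

Unset Implicit Arguments.

Theorem theorem2p2 (R : realType) (n k : nat) (A : 'M[R]_n.+1) (j : 'I_n.+1)
  (lam : R) (u v : 'cV[R]_n.+1) :
  A ord0 j < 0 ->
  0 < lam ->
  simple_eigenvalue A lam ->
  A *m u = lam *: u ->
  v^T *m A = lam *: v^T ->
  (forall i, 0 < u i 0) ->
  (forall i, 0 < v i 0) ->
  let B := Bmat k.+1 A j lam in
  let w := ext_vec k.+1 u (u j 0) in
  let z := ext_vec k.+1 v (v ord0 0) in
  [/\ simple_eigenvalue B lam,
      B *m w = lam *: w,
      z^T *m B = lam *: z^T
    & alg_positive B].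
Proof.
move=> a_neg _ simpleA Au vA upos vpos B w z.
have wpos : forall i, 0 < w i 0 by apply: ext_vec_pos.
have zpos : forall i, 0 < z i 0 by apply: ext_vec_pos.
have Bw : B *m w = lam *: w by apply: Bmat_eigenvector.
have zB : z^T *m B = lam *: z^T by apply: Bmat_left_eigenvector.
have /(eigenvector_uniqP (pos_cV_neq0 upos) Au) uniqA := simple_eigenvalue_rank simpleA.
have simpleB : simple_eigenvalue B lam.
  apply: (simple_eigenvalue_of_rank _ Bw zB (pos_cV_dot_neq0 zpos wpos)).
  apply/(eigenvector_uniqP (pos_cV_neq0 wpos) Bw).
  exact: Bmat_eigenvector_uniq (ltr0_neq0 a_neg) uniqA.
split=> //; exact: simple_eigenvalue_alg_positive simpleB Bw zB wpos zpos.
Qed.
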